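(* Let $\Sigma=(\sigma_0,\sigma_\infty,\sigma_1,\tau)$ be a special admissible 4-tuple in $S_{2n}^4$ such that $\sigma_1\tau$ is a product of $n-3$ disjoint transpositions and a disjoint 3-cycle. Then there exist integers $h,k$ with $1\le h\le n-2$, $h<k<2n-h$ and $h\equiv k\pmod 2$ such that $\sigma_0=\prod_{i=1}^{h}(i,2n+1-i)\prod_{j=1}^{(k-h)/2}(h+j,k+1-j)\prod_{t=1}^{(2n-h-k)/2}(k+t,2n-h+1-t)$ and $\sigma_1\tau=\prod_{i=1}^{h-1}(i,2n-i)\prod_{j=1}^{(k-h)/2-1}(h+j,k-j)\prod_{t=1}^{(2n-h-k)/2-1}(k+t,2n-h-t)\,\cdot(2n-h,\,h,\,k)$. In particular $\sigma_1\tau$ fixes exactly the three indices $2n$, $(k+h)/2$ and $(2n-h+k)/2$. Moreover, for each such $(h,k)$ there are exactly three special tuples with these $\sigma_0$ and $\sigma_1\tau$, corresponding to $\tau\in\{(h,k),(h,2n-h),(k,2n-h)\}$.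
   Context: Permutation products are read left to right ($\sigma\sigma'$: first $\sigma$, then $\sigma'$); $(a,b,c)$ denotes the cycle $a\mapsto b\mapsto c\mapsto a$. An admissible 4-tuple is $(\sigma_0,\sigma_\infty,\sigma_1,\tau)\in S_{2n}^4$ with $\sigma_0$ a product of $n$ disjoint transpositions, $\sigma_\infty$ a $2n$-cycle, $\sigma_1$ a product of $n-2$ disjoint transpositions, $\tau$ a transposition, and $\sigma_0\sigma_\infty\sigma_1\tau=\mathrm{id}$. It is special if $\sigma_\infty=(2n,2n-1,\dots,1)$ and $\sigma_1(2n)=\tau(2n)=2n$. *)

(* Permutations of {1,...,N} are modelled as {perm 'I_N};
   the label of x : 'I_N is (val x).+1.  MathComp's product of permutations
   is read left to right: (s * t) x = t (s x), matching the paper. *)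
From mathcomp Require Import all_boot all_order all_fingroup.


Unset Printing Implicit Defensive.


Definition lbl {N : nat} (x : 'I_N) : nat := (val x).+1.

(* the transposition (a,b) of labels a b in {1..N} (identity if out of range) *)
Definition tp {N : nat} (a b : nat) : {perm 'I_N} :=
  match @insub _ (fun i => i < N) _ a.-1, @insub _ (fun i => i < N) _ b.-1 with
  | Some x, Some y => tperm x y
  | _, _ => 1%g
  end.

(* the 3-cycle (a,b,c) : a |-> b |-> c |-> a  (on points) *)
Definition cyc3 {N : nat} (a b c : 'I_N) : {perm 'I_N} := (tperm a b * tperm a c)%g.

Definition tc {N : nat} (a b c : nat) : {perm 'I_N} :=
  match @insub _ (fun i => i < N) _ a.-1, @insub _ (fun i => i < N) _ b.-1,
        @insub _ (fun i => i < N) _ c.-1 with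
  | Some x, Some y, Some z => cyc3 x y z
  | _, _, _ => 1%g
  end.

Definition prod_disj_transp {N : nat} (k : nat) (s : {perm 'I_N}) : Prop :=
  exists ps : seq ('I_N * 'I_N),
    size ps = k /\ uniq (flatten [seq [:: p.1; p.2] | p <- ps]) /\
    s = (\prod_(p <- ps) tperm p.1 p.2)%g.

Definition prod_disj_transp_3cycle {N : nat} (k : nat) (s : {perm 'I_N}) : Prop :=
  exists (ps : seq ('I_N * 'I_N)) (a b c : 'I_N),
    size ps = k /\ uniq (flatten [seq [:: p.1; p.2] | p <- ps] ++ [:: a; b; c]) /\
    s = ((\prod_(p <- ps) tperm p.1 p.2)%g * cyc3 a b c)%g.

Definition is_kcycle {N : nat} (k : nat) (s : {perm 'I_N}) : Prop :=
  exists x : 'I_N, #|porbit s x| = k /\ (forall y, y \notin porbit s x -> s y = y).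

Definition is_transposition {N : nat} (t : {perm 'I_N}) : Prop :=
  exists x y : 'I_N, x != y /\ t = tperm x y.

Definition admissible (n : nat) (s0 sinf s1 t : {perm 'I_(2 * n)}) : Prop :=
  [/\ prod_disj_transp n s0, is_kcycle (2 * n) sinf, prod_disj_transp (n - 2) s1,
      is_transposition t & (s0 * sinf * s1 * t = 1)%g].

(* special: sinf = (2n, 2n-1, ..., 1) and s1, t fix 2n *)
Definition special (n : nat) (s0 sinf s1 t : {perm 'I_(2 * n)}) : Prop :=
  [/\ forall x, lbl (sinf x) = (if lbl x == 1 then 2 * n else (lbl x).-1),
      forall x, lbl x = 2 * n -> s1 x = x
    & forall x, lbl x = 2 * n -> t x = x].

Definition special_admissible (n : nat) (s0 sinf s1 t : {perm 'I_(2 * n)}) : Prop :=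
  admissible n s0 sinf s1 t /\ special n s0 sinf s1 t.

Definition P0 (n h k : nat) : {perm 'I_(2 * n)} :=
  ((\prod_(1 <= i < h.+1) tp i (2 * n + 1 - i)) *
   (\prod_(1 <= j < ((k - h) %/ 2).+1) tp (h + j) (k + 1 - j)) *
   (\prod_(1 <= t < ((2 * n - h - k) %/ 2).+1) tp (k + t) (2 * n - h + 1 - t)))%g.

Definition P1 (n h k : nat) : {perm 'I_(2 * n)} :=
  ((\prod_(1 <= i < h) tp i (2 * n - i)) *
   (\prod_(1 <= j < (k - h) %/ 2) tp (h + j) (k - j)) *
   (\prod_(1 <= t < (2 * n - h - k) %/ 2) tp (k + t) (2 * n - h - t)) *
   tc (2 * n - h) h k)%g.

From mathcomp Require Import all_boot all_order all_fingroup.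
From mathcomp Require Import zify.

(* Work with 0-based indices and write S for sigma_0.  The relation
   sigma_0 sigma_inf (sigma_1 tau) = 1 says that phi := sigma_1 tau is S
   precomposed with v |-> v + 1 (mod 2n).  Since S is a fixed-point-free
   involution and phi is an involution off its 3-cycle (a, b, c), a chord
   u -- v of S forces the parallel chord u+1 -- v-1 unless v-1 lies on the
   3-cycle.  Starting from the chord 0 -- 2n-1 (phi fixes the last point),
   the chords of S therefore form three nested ladders, which can only break
   at a, b and c: this is exactly P0, the parities coming from S having no
   fixed point, and then sigma_1 tau = P1.  Conversely, sigma_1 = P1 tau is
   an involution only if tau is a transposition of two points of the
   3-cycle of P1, and each of the three choices works. *)

(** * Labels, transpositions and 3-cycles *)

Lemma tpermE (T : finType) (x y z : T) :
  tperm x y z = if z == x then y else if z == y then x else z.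
Proof.
case: tpermP => [->|->|/eqP zx /eqP zy]; rewrite ?eqxx //.
  by case: eqP => // ->.
by rewrite (negbTE zx) (negbTE zy).
Qed.

Lemma cyc3E {N} (x y z w : 'I_N) : x != y -> x != z -> y != z ->
  cyc3 x y z w = if w == x then y else if w == y then z else if w == z then x else w.
Proof.
move=> xy xz yz; rewrite /cyc3 permM !tpermE.
case: (eqVneq w x) => [|wx]; first by rewrite eq_sym (negbTE xy) (negbTE yz).
case: (eqVneq w y) => [|wy]; first by rewrite eqxx.
by rewrite (negbTE wx).
Qed.

Lemma lbl_inj {N} : injective (@lbl N).
Proof. by move=> x y [] /val_inj. Qed.

Lemma lbl_eq {N} (x y : 'I_N) : (lbl x == lbl y) = (x == y).
Proof. exact: (inj_eq (@lbl_inj N)). Qed.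

Lemma lbl_bound {N} (x : 'I_N) : 0 < lbl x <= N.
Proof. exact: ltn_ord. Qed.

Lemma exists_lbl N l : 0 < l <= N -> {x : 'I_N | lbl x = l}.
Proof.
case/andP=> l_gt0 l_le; have lt : l.-1 < N by lia.
by exists (Ordinal lt); rewrite /lbl /= prednK.
Qed.

Lemma tp_tperm {N a b} {u v : 'I_N} : lbl u = a -> lbl v = b -> tp a b = tperm u v.
Proof. by move=> <- <-; rewrite /tp /lbl /= !valK. Qed.

Lemma tc_cyc3 N a b c (u v w : 'I_N) :
  lbl u = a -> lbl v = b -> lbl w = c -> tc a b c = cyc3 u v w.
Proof. by move=> <- <- <-; rewrite /tc /lbl /= !valK. Qed.

Lemma lbl_tp N a b (x : 'I_N) : 0 < a <= N -> 0 < b <= N ->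
  lbl (tp a b x) = if lbl x == a then b else if lbl x == b then a else lbl x.
Proof.
move=> /exists_lbl[u <-] /exists_lbl[v <-].
by rewrite (@tp_tperm _ _ _ u v) // tpermE !lbl_eq; case: ifP => //; case: ifP.
Qed.

Lemma lbl_tc N a b c (x : 'I_N) : 0 < a <= N -> 0 < b <= N -> 0 < c <= N ->
  a != b -> a != c -> b != c ->
  lbl (tc a b c x) = if lbl x == a then b else if lbl x == b then c
                     else if lbl x == c then a else lbl x.
Proof.
move=> /exists_lbl[u <-] /exists_lbl[v <-] /exists_lbl[w <-]; rewrite !lbl_eq => uv uw vw.
by rewrite (@tc_cyc3 _ _ _ _ u v w) // cyc3E //; case: ifP => //; case: ifP => //; case: ifP.
Qed.

Lemma cyc3_cycle {N} {x y z : 'I_N} : x != y -> x != z -> y != z ->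
  [/\ cyc3 x y z x = y, cyc3 x y z y = z & cyc3 x y z z = x].
Proof.
move=> xy xz yz; rewrite /cyc3 !permM tpermL tpermR tpermL (tpermD xy) 1?eq_sym //.
by rewrite (tpermD xz) ?tpermR // eq_sym.
Qed.

Lemma cyc3_id {N} {x y z w : 'I_N} : w \notin [:: x; y; z] -> cyc3 x y z w = w.
Proof. by rewrite !inE !negb_or => /and3P[wx wy wz]; rewrite /cyc3 permM !tpermD // 1?eq_sym. Qed.

Definition is_rotation {N} (s : {perm 'I_N}) : Prop :=
  forall x, lbl (s x) = if lbl x == 1 then N else (lbl x).-1.

Lemma rotation_kcycle N (s : {perm 'I_N}) : 0 < N -> is_rotation s -> is_kcycle N s.
Proof.
move=> N_gt0 rot_s; have [x0 lbl_x0] := @exists_lbl N N ltac:(lia).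
have lbl_iter j : j < N -> lbl ((s ^+ j)%g x0) = N - j.
  elim: j => [|j IH] lt_j; first by rewrite expg0 perm1 lbl_x0 subn0.
  by rewrite expgSr permM rot_s IH; [case: ifP; lia | lia].
have orbitT : porbit s x0 = setT.
  apply/setP => y; rewrite inE; apply/porbitP; exists (N - lbl y).
  by apply: lbl_inj; move: (lbl_bound y) => y_bound; rewrite lbl_iter; lia.
by exists x0; rewrite orbitT cardsT card_ord; split => // y; rewrite inE.
Qed.

Lemma rotationV {N} {s : {perm 'I_N}} : is_rotation s ->
  forall x, lbl ((s^-1)%g x) = if lbl x == N then 1 else (lbl x).+1.
Proof.
move=> rot x; have := rot ((s^-1)%g x); rewrite permKV.
by move: (lbl_bound x) (lbl_bound ((s^-1)%g x)); case: ifP; case: ifP; lia.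
Qed.

Lemma card_lbl_in N (L : seq nat) : uniq L -> all (fun l => 0 < l <= N) L ->
  #|[pred x : 'I_N | lbl x \in L]| = size L.
Proof.
elim: L => [|l L IH] /=; first by rewrite card0.
case/andP=> l_notin uL /andP[/exists_lbl[x lx] L_bound].
rewrite (cardD1 x) inE lx mem_head -(IH uL L_bound); congr _.+1; apply: eq_card => y.
rewrite !inE -lbl_eq lx; case: eqP => [->|_] //=.
by rewrite (negbTE l_notin).
Qed.

(** * The label maps of P0 and P1 *)

Lemma lbl_ladder N p q m (x : 'I_N) : p + 2 * m <= q + 1 -> q <= N.+1 ->
  lbl ((\prod_(1 <= i < m) tp (p + i) (q - i))%g x) =
  if (p < lbl x < p + m) || (q - m < lbl x < q) then p + q - lbl x else lbl x.
Proof.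
move: (lbl_bound x) => xN; elim: m => [|m IH] pq qN.
  by rewrite big_geq // perm1; case: ifP => //; lia.
have [m0|m_gt0] := posnP m.
  by rewrite m0 big_geq // perm1; case: ifP => //; lia.
rewrite big_nat_recr //= permM lbl_tp; [|lia|lia].
by rewrite IH; [repeat case: ifP; lia|lia|lia].
Qed.

Definition P0_map (n h k l : nat) : nat :=
  if l <= h then 2 * n + 1 - l else if l <= k then h + k + 1 - l
  else if l <= 2 * n - h then 2 * n - h + k + 1 - l else 2 * n + 1 - l.

(* first l |-> l + 1 (mod 2n), i.e. sigma_inf^-1, then P0 *)
Definition P1_map (n h k l : nat) : nat := P0_map n h k (if l == 2 * n then 1 else l.+1).

(* rewrite an innermost [if] whose condition [lia] decides *)
Ltac decide_if := match goal with |- context[if ?c then _ else _] =>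
  lazymatch c with context[if _ then _ else _] => fail | _ =>
  first [ rewrite (_ : c = true); [|by apply/idP; lia]
        | rewrite (_ : c = false); [|by apply/negbTE/negP; lia] ] end end.

Section ChordDiagrams.

Context {n h k : nat}.
Hypotheses (h_gt0 : 0 < h) (h_lt_k : h < k) (k_lt : k < 2 * n - h)
  (hk_mod2 : h = k %[mod 2]).

Let m2 := (k - h) %/ 2.
Let m3 := (2 * n - h - k) %/ 2.

Lemma double_m2 : k - h = 2 * m2. Proof. rewrite /m2; lia. Qed.
Lemma double_m3 : 2 * n - h - k = 2 * m3. Proof. rewrite /m3; lia. Qed.

Ltac regions l :=
  have := double_m2; have := double_m3; move=> ? ?;
  have : l < h \/ l = h \/ h < l < h + m2 \/ l = h + m2 \/
         h + m2 < l < k \/ l = k \/ k < l < k + m3 \/ l = k + m3 \/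
         k + m3 < l < 2 * n - h \/ l = 2 * n - h \/ 2 * n - h < l < 2 * n \/ l = 2 * n;
  [lia | case=> [R|[R|[R|[R|[R|[R|[R|[R|[R|[R|[R|R]]]]]]]]]]]].

Lemma lbl_P0 (x : 'I_(2 * n)) : lbl (P0 n h k x) = P0_map n h k (lbl x).
Proof.
have := double_m2; have := double_m3; rewrite /P0 !permM -/m2 -/m3 => e3 e2.
rewrite (@lbl_ladder _ k) ?(@lbl_ladder _ h) ?(@lbl_ladder _ 0); try lia.
rewrite /P0_map; move: (lbl_bound x); move: (lbl x) => l /andP[l0 lN].
by regions l; repeat decide_if; lia.
Qed.

Lemma lbl_P1 (x : 'I_(2 * n)) : lbl (P1 n h k x) = P1_map n h k (lbl x).
Proof.
have := double_m2; have := double_m3; rewrite /P1 !permM -/m2 -/m3 => e3 e2.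
rewrite lbl_tc ?(@lbl_ladder _ k) ?(@lbl_ladder _ h) ?(@lbl_ladder _ 0); try lia.
rewrite /P1_map /P0_map; move: (lbl_bound x); move: (lbl x) => l /andP[l0 lN].
by regions l; repeat decide_if; lia.
Qed.

Lemma P0_map_invol {l} : 0 < l <= 2 * n ->
  [/\ P0_map n h k (P0_map n h k l) = l, 0 < P0_map n h k l <= 2 * n
    & P0_map n h k l != l].
Proof. by rewrite /P0_map => /andP[l0 lN]; regions l; repeat decide_if; split; lia. Qed.

Lemma P1_map_pred l : 0 < l <= 2 * n ->
  P1_map n h k (if l == 1 then 2 * n else l.-1) = P0_map n h k l.
Proof.
rewrite /P1_map => /andP[l0 lN].
by case: (eqVneq l 1) => [->|l1]; rewrite ?eqxx // ifF ?prednK //; lia.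
Qed.

Lemma P1_map_fix {l} : 0 < l <= 2 * n ->
  P1_map n h k l = l <-> l = 2 * n \/ l = (k + h) %/ 2 \/ l = (2 * n - h + k) %/ 2.
Proof.
rewrite /P1_map /P0_map => /andP[l0 lN].
have -> : (k + h) %/ 2 = h + m2 by rewrite /m2; lia.
have -> : (2 * n - h + k) %/ 2 = k + m3 by rewrite /m3; lia.
by regions l; repeat decide_if; split; lia.
Qed.

Lemma P1_map_3cycle :
  [/\ P1_map n h k (2 * n - h) = h, P1_map n h k h = k & P1_map n h k k = 2 * n - h].
Proof. by rewrite /P1_map /P0_map; split; repeat decide_if; lia. Qed.

Lemma P1_map_invol l : 0 < l <= 2 * n -> l != 2 * n - h -> l != h -> l != k ->
  P1_map n h k (P1_map n h k l) = l.
Proof.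
rewrite /P1_map /P0_map => /andP[l0 lN] /eqP lA /eqP lB /eqP lC.
by regions l; repeat decide_if; lia.
Qed.

Lemma P0_sinf_P1 {sinf} : is_rotation sinf -> (P0 n h k * sinf * P1 n h k = 1)%g.
Proof.
move=> rot; apply/permP => x; apply: lbl_inj.
have [P0P0 P0_bound _] := P0_map_invol (lbl_bound x).
by rewrite perm1 (permM (P0 n h k * sinf)) (permM (P0 n h k)) lbl_P1 rot lbl_P0 P1_map_pred.
Qed.

Lemma P0K : involutive (P0 n h k).
Proof.
by move=> x; apply: lbl_inj; rewrite !lbl_P0; case: (P0_map_invol (lbl_bound x)).
Qed.

Lemma P0_moved x : P0 n h k x != x.
Proof. by rewrite -lbl_eq lbl_P0; case: (P0_map_invol (lbl_bound x)). Qed.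

Lemma P1_fix x : P1 n h k x = x <->
  lbl x = 2 * n \/ lbl x = (k + h) %/ 2 \/ lbl x = (2 * n - h + k) %/ 2.
Proof. by rewrite -(P1_map_fix (lbl_bound x)) -lbl_P1; split => [->|/lbl_inj]. Qed.

Lemma P1_3cycle {u v w : 'I_(2 * n)} : lbl u = 2 * n - h -> lbl v = h -> lbl w = k ->
  [/\ P1 n h k u = v, P1 n h k v = w & P1 n h k w = u].
Proof.
move=> lu lv lw; have [A B C] := P1_map_3cycle.
by split; apply: lbl_inj; rewrite lbl_P1 ?lu ?lv ?lw.
Qed.

Lemma P1K_off x : lbl x \notin [:: 2 * n - h; h; k] -> P1 n h k (P1 n h k x) = x.
Proof.
rewrite !inE !negb_or => /and3P[xA xB xC]; apply: lbl_inj.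
by rewrite !lbl_P1 P1_map_invol // lbl_bound.
Qed.

Lemma card_P1_fix : #|[pred x | P1 n h k x == x]| = 3.
Proof.
have e2 := double_m2; have e3 := double_m3.
rewrite (_ : 3 = size [:: 2 * n; (k + h) %/ 2; (2 * n - h + k) %/ 2]) // -(card_lbl_in (2 * n)).
  apply: eq_card => x; rewrite !inE; apply/eqP/idP; rewrite P1_fix.
  - by case=> [->|[->|->]]; rewrite eqxx ?orbT.
  - by case/or3P=> /eqP->; auto.
all: rewrite /= ?inE; lia.
Qed.

End ChordDiagrams.

(** * Products of disjoint transpositions *)

Section DisjointTranspositions.

Context {T : finType}.
Implicit Types (s : {perm T}) (ps : seq (T * T)).

Definition pairs_support ps : seq T := flatten [seq [:: p.1; p.2] | p <- ps].
Definition tperm_prod ps : {perm T} := (\prod_(p <- ps) tperm p.1 p.2)%g.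

Lemma size_pairs_support ps : size (pairs_support ps) = 2 * size ps.
Proof. by elim: ps => //= p ps IH; rewrite -/(pairs_support ps) IH; lia. Qed.

Lemma tperm_prod_cons p ps : tperm_prod (p :: ps) = (tperm p.1 p.2 * tperm_prod ps)%g.
Proof. exact: big_cons. Qed.

Lemma tperm_prod_id {ps x} : x \notin pairs_support ps -> tperm_prod ps x = x.
Proof.
elim: ps => [|p ps IH]; first by rewrite /tperm_prod big_nil perm1.
rewrite tperm_prod_cons permM !inE !negb_or => /and3P[x1 x2 /IH].
by rewrite tpermD 1?eq_sym.
Qed.

Lemma tperm_prodK {ps} : uniq (pairs_support ps) -> involutive (tperm_prod ps).
Proof.
elim: ps => [|p ps IH] /= u x; first by rewrite /tperm_prod big_nil !perm1.
move: u; rewrite -/(pairs_support ps) tperm_prod_cons !permM /= !inE !negb_or.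
case/andP=> /andP[_ p1] /andP[p2 u].
case: (tpermP p.1 p.2 x) => [->|->|/eqP x1 /eqP x2].
- by rewrite (tperm_prod_id p2) tpermR tperm_prod_id.
- by rewrite (tperm_prod_id p1) tpermL tperm_prod_id.
have y1 : tperm_prod ps x != p.1.
  by apply: contra x1 => /eqP e; rewrite -(IH u x) e (tperm_prod_id p1).
have y2 : tperm_prod ps x != p.2.
  by apply: contra x2 => /eqP e; rewrite -(IH u x) e (tperm_prod_id p2).
by rewrite tpermD 1?eq_sym // IH.
Qed.

Lemma tperm_prod_moved ps x : uniq (pairs_support ps) -> x \in pairs_support ps ->
  tperm_prod ps x != x.
Proof.
elim: ps => [|p ps IH] //=; rewrite -/(pairs_support ps) tperm_prod_cons permM !inE !negb_or.
case/andP=> /andP[p12 p1] /andP[p2 u] /or3P[/eqP->|/eqP->|xps].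
- by rewrite tpermL tperm_prod_id // eq_sym.
- by rewrite tpermR tperm_prod_id.
have x1 : p.1 != x by apply: contra p1 => /eqP ->.
have x2 : p.2 != x by apply: contra p2 => /eqP ->.
by rewrite tpermD // IH.
Qed.

Lemma involutive_tperm_prod {s} : involutive s ->
  exists ps, [/\ uniq (pairs_support ps), s = tperm_prod ps
               & pairs_support ps =i [pred z | s z != z]].
Proof.
have [m] := ubnP #|[pred z | s z != z]|; elim: m s => // m IH s lt_m sK.
have [x /= sx | fixed] := pickP [pred z | s z != z]; last first.
  exists [::]; split => // [|z]; last by rewrite inE; move: (fixed z) => /= ->.
  by apply/permP => z; rewrite /tperm_prod big_nil perm1; apply/eqP/negbFE/fixed.
pose y := s x; pose s' := (tperm x y * s)%g.
have s'E z : s' z = if (z == x) || (z == y) then z else s z.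
  rewrite permM; case: tpermP => [->|->|/eqP zx /eqP zy]; rewrite ?eqxx ?orbT //.
    by rewrite sK.
  by rewrite (negbTE zx) (negbTE zy).
have s'K : involutive s'.
  move=> z; have [zxy|/norP[zx zy]] := boolP ((z == x) || (z == y)).
    by rewrite (s'E z) zxy s'E zxy.
  have szx : (s z == x) = (z == y) by rewrite -(inj_eq (@perm_inj _ s)) sK.
  have szy : (s z == y) = (z == x) by rewrite /y (inj_eq (@perm_inj _ s)).
  by rewrite (s'E z) (negbTE zx) (negbTE zy) s'E szx szy (negbTE zx) (negbTE zy) sK.
have lt_m' : #|[pred z | s' z != z]| < m.
  suff : #|[pred z | s' z != z]| < #|[pred z | s z != z]| by lia.
  apply: proper_card; apply/properP; split.
    by apply/subsetP => z; rewrite !inE s'E; case: ifP => //; rewrite eqxx.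
  by exists x; rewrite !inE ?s'E ?eqxx.
have [ps [u s'ps supp]] := IH s' lt_m' s'K.
exists ((x, y) :: ps); split.
- rewrite /= -/(pairs_support ps) u !inE !supp !inE !s'E !eqxx !orbT /= andbT.
  by rewrite orbF eqxx andbT eq_sym.
- by rewrite tperm_prod_cons -s'ps mulgA tperm2 mul1g.
- move=> z; rewrite /= -/(pairs_support ps) !inE supp inE s'E.
  case: (eqVneq z x) => [->|zx] //=; case: (eqVneq z y) => [->|zy] //=.
  by rewrite /y sK eq_sym.
Qed.

End DisjointTranspositions.

Lemma prod_disj_transpK {N k} {s : {perm 'I_N}} : prod_disj_transp k s -> involutive s.
Proof. by case=> ps [_ [u ->]]; apply: tperm_prodK. Qed.

Lemma prod_disj_transp_id {N} k (s : {perm 'I_N}) :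
  involutive s -> #|[pred z | s z != z]| = 2 * k -> prod_disj_transp k s.
Proof.
move=> sK card_moved; have [ps [u eq_s supp]] := involutive_tperm_prod sK.
exists ps; split => //; apply/eqP; rewrite -(eqn_pmul2l (isT : 0 < 2)) -card_moved.
by rewrite -size_pairs_support -(card_uniqP u) (eq_card supp).
Qed.

Lemma prod_disj_transp_moved {n} {s : {perm 'I_(2 * n)}} :
  prod_disj_transp n s -> forall x, s x != x.
Proof.
case=> ps [size_ps [u ->]] x; apply: tperm_prod_moved => //.
have full : #|pairs_support ps| = #|'I_(2 * n)|.
  by rewrite (card_uniqP u) size_pairs_support size_ps card_ord.
by rewrite (subset_cardP full (subset_predT _)).
Qed.

Lemma prod_disj_transp_3cycleP N k (phi : {perm 'I_N}) :
  prod_disj_transp_3cycle k phi ->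
  exists a b c : 'I_N, [/\ [&& a != b, a != c & b != c],
    [/\ phi a = b, phi b = c & phi c = a]
    & forall z, z \notin [:: a; b; c] -> phi (phi z) = z].
Proof.
case=> ps [a [b [c [_ [u ->]]]]]; rewrite -/(tperm_prod ps).
move: u; rewrite cat_uniq /= !inE !negb_or !andbT -!andbA -/(pairs_support ps).
case/and4P=> u na nb /and4P[nc ab ac bc].
have prK := tperm_prodK u.
move: (tperm_prod_id na) (tperm_prod_id nb) (tperm_prod_id nc) => pra prb prc.
have [cyc_a cyc_b cyc_c] := cyc3_cycle ab ac bc.
exists a, b, c; split; first by rewrite ab ac bc.
  by rewrite !(permM (tperm_prod ps)) pra prb prc.
move=> z z_off.
have pz_off : tperm_prod ps z \notin [:: a; b; c].
  move: z_off; rewrite !inE; apply: contra => /or3P[] /eqP e;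
    by rewrite -(prK z) e ?pra ?prb ?prc eqxx ?orbT.
by rewrite !(permM (tperm_prod ps)) (cyc3_id pz_off) prK cyc3_id.
Qed.

Section TranspositionsOnThreeCycle.

Context {T : finType} {P : {perm T}} {A B C : T}.
Hypotheses (AB : A != B) (AC : A != C) (BC : B != C)
  (PA : P A = B) (PB : P B = C) (PC : P C = A).

Lemma mem_3cycle_of_mul_tpermK {x y} : involutive (P * tperm x y)%g -> x \in [:: A; B; C].
Proof.
move=> sK; have sE z : (P * tperm x y)%g z = tperm x y (P z) by rewrite permM.
apply: contraT; rewrite !inE !negb_or => /and3P[xA xB xC].
have fixes z : x != z -> y != z -> tperm x y z = z by exact: tpermD.
have BA : B != A by rewrite eq_sym.
have CB : C != B by rewrite eq_sym.
have CA : C != A by rewrite eq_sym.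
have [yA|yA] := eqVneq y A.
  subst y; have := sK B; rewrite !sE PB (fixes C) // PC tpermR.
  by move/eqP; rewrite (negbTE xB).
have [yB|yB] := eqVneq y B.
  subst y; have := sK C; rewrite !sE PC (fixes A) // PA tpermR.
  by move/eqP; rewrite (negbTE xC).
have [yC|yC] := eqVneq y C.
  subst y; have := sK A; rewrite !sE PA (fixes B) // PB tpermR.
  by move/eqP; rewrite (negbTE xA).
have := sK A; rewrite !sE PA (fixes B) // PB (fixes C) // => /eqP.
by rewrite (negbTE CA).
Qed.

Lemma tperm_of_mul_tpermK {x y} : x != y -> involutive (P * tperm x y)%g ->
  tperm x y \in [:: tperm B C; tperm B A; tperm C A].
Proof.
move=> xy sK; have x_mem := mem_3cycle_of_mul_tpermK sK.
rewrite tpermC in sK; have y_mem := mem_3cycle_of_mul_tpermK sK.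
move: x_mem y_mem xy; rewrite !inE => /or3P[]/eqP-> /or3P[]/eqP->; rewrite ?eqxx // => _;
  by rewrite ?[tperm C B]tpermC ?[tperm A B]tpermC ?[tperm A C]tpermC ?eqxx ?orbT.
Qed.

Lemma uniq_tperm_3cycle : uniq [:: tperm B C; tperm B A; tperm C A].
Proof.
have BA : B != A by rewrite eq_sym.
have CA : C != A by rewrite eq_sym.
have CB : C != B by rewrite eq_sym.
rewrite /= !inE andbT negb_or -andbA; apply/and3P; split; apply/eqP.
- by move=> /permP/(_ C)/eqP; rewrite tpermR tpermD // (negbTE BC).
- by move=> /permP/(_ B)/eqP; rewrite tpermL tpermD // eq_sym (negbTE BC).
- by move=> /permP/(_ B)/eqP; rewrite tpermL tpermD // (negbTE AB).
Qed.

Hypothesis PK : forall {z}, z \notin [:: A; B; C] -> P (P z) = z.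

Lemma perm_3cycle_off {z} : z \notin [:: A; B; C] -> P z \notin [:: A; B; C].
Proof.
move=> z_off; apply/negP; have := PK z_off.
rewrite !inE => + /or3P[]/eqP e; rewrite e ?PA ?PB ?PC => e'; move: z_off;
  by rewrite -e' !inE eqxx ?orbT.
Qed.

Lemma mul_tperm_3cycle_values :
  [/\ (P * tperm B C)%g A = C, (P * tperm B C)%g B = B, (P * tperm B C)%g C = A
    & forall z, z \notin [:: A; B; C] -> (P * tperm B C)%g z = P z].
Proof.
rewrite !permM PA PB PC tpermL tpermR tpermD 1?eq_sym //; split=> // z z_off.
move: (perm_3cycle_off z_off); rewrite !inE !negb_or => /and3P[_ PzB PzC].
by rewrite permM tpermD 1?eq_sym.
Qed.

Lemma mul_tperm_3cycleK : involutive (P * tperm B C)%g.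
Proof.
have [sA sB sC s_off] := mul_tperm_3cycle_values.
move=> z; have [|z_off] := boolP (z \in [:: A; B; C]).
  by rewrite !inE => /or3P[]/eqP->; rewrite ?sA ?sB ?sC.
by rewrite (s_off _ z_off) s_off ?PK ?perm_3cycle_off.
Qed.

Lemma mul_tperm_3cycle_fix z : ((P * tperm B C)%g z == z) = (P z == z) || (z == B).
Proof.
have [sA sB sC s_off] := mul_tperm_3cycle_values.
have [|z_off] := boolP (z \in [:: A; B; C]).
  rewrite !inE => /or3P[]/eqP->; rewrite ?sA ?sB ?sC ?PA ?PB ?PC ?eqxx ?orbT //.
  - by rewrite ![_ == A]eq_sym (negbTE AC) (negbTE AB).
  - by rewrite (negbTE AC) [C == B]eq_sym (negbTE BC).
rewrite s_off //; move: z_off; rewrite !inE !negb_or => /and3P[_ zB _].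
by rewrite (negbTE zB) orbF.
Qed.

End TranspositionsOnThreeCycle.

(** * Chord ladders *)

Definition succ_mod N v := (v + 1) %% N.

Section ChordLadders.

Variables (n : nat) (S : nat -> nat) (a b c : nat).

Let phi := S \o succ_mod (2 * n).

Hypotheses (SK : forall v, v < 2 * n -> S (S v) = v)
  (S_moved : forall v, v < 2 * n -> S v <> v)
  (S0 : S 0 = 2 * n - 1)
  (a_lt : a < 2 * n) (b_lt : b < 2 * n) (c_lt : c < 2 * n)
  (a_neq_b : a <> b) (a_neq_c : a <> c) (b_neq_c : b <> c)
  (phi_a : phi a = b) (phi_b : phi b = c) (phi_c : phi c = a)
  (phiK : forall z, z < 2 * n -> z <> a -> z <> b -> z <> c -> phi (phi z) = z)
  (b_le_a : b <= a) (c_le_a : c <= a).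

Lemma ladder_reflect p q : q < 2 * n ->
  (forall j, p + j <= q - j -> S (p + j) = q - j) ->
  forall v, p <= v <= q -> S v = p + q - v.
Proof.
move=> lt_q ladder v /andP[le_pv le_vq]; case: (leqP (v - p) (q - v)) => le.
  by have := ladder (v - p) ltac:(lia); rewrite subnKC //; lia.
have := ladder (q - v) ltac:(lia) => e.
by rewrite -{1}(_ : q - (q - v) = v) -?e ?SK //; lia.
Qed.

Lemma ladder_odd p q : p <= q < 2 * n ->
  (forall j, p + j <= q - j -> S (p + j) = q - j) -> (q - p) %% 2 = 1.
Proof.
move=> pq ladder; case: (eqVneq ((q - p) %% 2) 1) => // even_qp.
have [m qpE] : exists m, q - p = 2 * m by exists ((q - p) %/ 2); lia.
by case: (S_moved (p + m)); [lia | rewrite ladder; lia].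
Qed.

Lemma S_succ_modE v : v < 2 * n - 1 -> phi v = S (v + 1).
Proof. by move=> lt_v; rewrite /phi /= /succ_mod modn_small //; lia. Qed.

Lemma a_lt_last : a < 2 * n - 1.
Proof.
case: (ltnP a (2 * n - 1)) => // a_ge; have a1 : a + 1 = 2 * n by lia.
by move: phi_a; rewrite /phi /= /succ_mod a1 modnn S0; lia.
Qed.

Lemma S_parallel u v : u < 2 * n - 1 -> 0 < v < 2 * n -> S u = v ->
  v - 1 <> a -> v - 1 <> b -> v - 1 <> c -> S (u + 1) = v - 1.
Proof.
move=> lt_u v_bound Su va vb vc.
have := phiK (v - 1) ltac:(lia) va vb vc.
rewrite [phi (v - 1)]S_succ_modE; last by lia.
by rewrite (_ : v - 1 + 1 = v); [rewrite -Su SK ?S_succ_modE //; lia | lia].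
Qed.

(* in labels, a + 1 = 2n - h, b + 1 = h and c + 1 = k *)
Let h := 2 * n - 1 - a.

Lemma S_outer i : i < h -> i < n -> S i = 2 * n - 1 - i.
Proof.
elim: i => [|i IH] lt_h lt_n; first by rewrite S0 subn0.
have := S_parallel i (2 * n - 1 - i) ltac:(lia) ltac:(lia) (IH ltac:(lia) ltac:(lia)).
by rewrite addn1 => ->; rewrite /h in lt_h *; lia.
Qed.

Lemma h_lt_n : h < n.
Proof.
case: (ltnP h n) => // h_ge.
have S_refl v : v < 2 * n -> S v = 2 * n - 1 - v.
  move=> lt_v; case: (ltnP v n) => lt_vn; first by apply: S_outer; lia.
  have := S_outer (2 * n - 1 - v) ltac:(lia) ltac:(lia) => Sw.
  rewrite -{1}(_ : 2 * n - 1 - (2 * n - 1 - v) = v); last by lia.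
  by rewrite -Sw SK; lia.
have := a_lt_last; move: phi_a phi_b; rewrite !S_succ_modE ?S_refl; lia.
Qed.

Lemma b_eq_pred_h : b = h - 1.
Proof.
have := a_lt_last; have := h_lt_n => ? ?.
have S_h1 : S (h - 1) = 2 * n - h by rewrite S_outer; rewrite /h; lia.
have a1 : a + 1 = 2 * n - h by rewrite /h; lia.
by rewrite -phi_a S_succ_modE // a1 -S_h1 SK //; lia.
Qed.

Lemma S_h_eq_c : S h = c.
Proof.
have := a_lt_last; have := b_eq_pred_h; have := h_lt_n; rewrite /h => ? ? ?.
by rewrite -phi_b S_succ_modE; [congr S | ]; lia.
Qed.

Lemma h_lt_c : h < c.
Proof.
have := a_lt_last; have := h_lt_n => ? ?.
case: (ltngtP h c) => // [c_lt_h|h_c]; last by case: (S_moved h); [lia | rewrite S_h_eq_c].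
have Sc : S c = h by rewrite -[in S c]S_h_eq_c SK //; lia.
by have := S_outer c c_lt_h ltac:(lia); rewrite Sc /h; lia.
Qed.

Lemma S_inner_low j : h + j <= c - j -> S (h + j) = c - j.
Proof.
have := a_lt_last; have := b_eq_pred_h; have := h_lt_c; rewrite /h => ? ? ?.
elim: j => [|j IH] le_j; first by rewrite addn0 subn0 S_h_eq_c.
have := S_parallel (h + j) (c - j) ltac:(lia) ltac:(lia) (IH ltac:(lia)).
by rewrite -[j.+1]addn1 addnA => ->; lia.
Qed.

Lemma S_inner_high j : c + 1 + j <= a - j -> S (c + 1 + j) = a - j.
Proof.
have := a_lt_last; have := b_eq_pred_h; have := h_lt_c; rewrite /h => ? ? ?.
elim: j => [|j IH] le_j; first by rewrite addn0 subn0 -phi_c S_succ_modE //; lia.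
have := S_parallel (c + 1 + j) (a - j) ltac:(lia) ltac:(lia) (IH ltac:(lia)).
by rewrite -[j.+1]addn1 addnA => ->; lia.
Qed.

Lemma S_chords_max_a : exists h k, [/\ 1 <= h <= n - 2, h < k < 2 * n - h, h = k %[mod 2]
  & forall v, v < 2 * n -> (S v).+1 = P0_map n h k v.+1].
Proof.
have := a_lt_last; have := b_eq_pred_h; have := h_lt_c; have := h_lt_n => ? ? ? ?.
have odd_low := ladder_odd h c ltac:(lia) S_inner_low.
have odd_high := ladder_odd (c + 1) a ltac:(lia) S_inner_high.
have refl_low := ladder_reflect h c ltac:(lia) S_inner_low.
have refl_high := ladder_reflect (c + 1) a ltac:(lia) S_inner_high.
exists h, c.+1; rewrite /h in odd_low odd_high refl_low refl_high *.
split; [lia | lia | lia | move=> v lt_v; rewrite /P0_map].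
have [v_low|[v_mid|[v_high|v_top]]] :
  v < h \/ h <= v <= c \/ c < v <= a \/ a < v by rewrite /h; lia.
- by rewrite S_outer //; rewrite /h in v_low *; [repeat decide_if | ]; lia.
- by rewrite refl_low; [repeat decide_if | ]; lia.
- by rewrite refl_high; [repeat decide_if | ]; lia.
have w_low : 2 * n - 1 - v < h by rewrite /h; lia.
have := S_outer _ w_low ltac:(lia) => Sw.
rewrite -{1}(_ : 2 * n - 1 - (2 * n - 1 - v) = v) -?Sw ?SK; last by lia.
  by repeat decide_if; lia.
all: lia.
Qed.

End ChordLadders.

Lemma S_chords n S a b c :
  (forall v, v < 2 * n -> S (S v) = v) -> (forall v, v < 2 * n -> S v <> v) ->
  S 0 = 2 * n - 1 -> a < 2 * n -> b < 2 * n -> c < 2 * n ->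
  a <> b -> a <> c -> b <> c ->
  (S \o succ_mod (2 * n)) a = b -> (S \o succ_mod (2 * n)) b = c ->
  (S \o succ_mod (2 * n)) c = a ->
  (forall z, z < 2 * n -> z <> a -> z <> b -> z <> c ->
     (S \o succ_mod (2 * n)) ((S \o succ_mod (2 * n)) z) = z) ->
  exists h k, [/\ 1 <= h <= n - 2, h < k < 2 * n - h, h = k %[mod 2]
    & forall v, v < 2 * n -> (S v).+1 = P0_map n h k v.+1].
Proof.
move=> SK S_moved S0 a_lt b_lt c_lt ab ac bc phi_a phi_b phi_c phiK.
have [[le_ba le_ca]|[[le_cb le_ab]|[le_ac le_bc]]] :
  (b <= a /\ c <= a) \/ (c <= b /\ a <= b) \/ (a <= c /\ b <= c) by lia.
- exact: (@S_chords_max_a n S a b c SK S_moved S0 a_lt b_lt c_lt ab ac bc phi_a phi_b phi_c phiK le_ba le_ca).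
- apply: (@S_chords_max_a n S b c a SK S_moved S0 b_lt c_lt a_lt bc (nesym ab) (nesym ac) phi_b phi_c phi_a) => //.
  by move=> z z_lt zb zc za; apply: phiK.
- apply: (@S_chords_max_a n S c a b SK S_moved S0 c_lt a_lt b_lt (nesym ac) (nesym bc) ab phi_c phi_a phi_b) => //.
  by move=> z z_lt zc za zb; apply: phiK.
Qed.

(** * The classification *)

(* [x0] is only a default value for out-of-range [v] *)
Definition nat_of_perm {N} (x0 : 'I_N) (s : {perm 'I_N}) (v : nat) : nat :=
  val (s (insubd x0 v)).

Section NatOfPerm.

Context {N : nat} (x0 : 'I_N) {s : {perm 'I_N}}.

Lemma nat_of_permE x : val (s x) = nat_of_perm x0 s (val x).
Proof. by rewrite /nat_of_perm valKd. Qed.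

Lemma lbl_nat_of_perm x : lbl (s x) = (nat_of_perm x0 s (val x)).+1.
Proof. by rewrite /nat_of_perm valKd. Qed.

Lemma nat_of_permK : involutive s ->
  forall v, v < N -> nat_of_perm x0 s (nat_of_perm x0 s v) = v.
Proof. by move=> sK v lt_v; rewrite /nat_of_perm valKd sK val_insubd lt_v. Qed.

Lemma nat_of_perm_moved : (forall x, s x != x) ->
  forall v, v < N -> nat_of_perm x0 s v <> v.
Proof.
move=> moved v lt_v e; have := moved (insubd x0 v); rewrite -(inj_eq val_inj).
by rewrite -/(nat_of_perm x0 s v) e val_insubd lt_v eqxx.
Qed.

End NatOfPerm.

Lemma val_phi_succ_mod {n} (x0 : 'I_(2 * n)) {s0 sinf phi : {perm 'I_(2 * n)}} :
  involutive s0 -> (s0 * sinf * phi = 1)%g -> is_rotation sinf ->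
  forall x, val (phi x) = (nat_of_perm x0 s0 \o succ_mod (2 * n)) (val x).
Proof.
move=> s0K prod1 rot x.
have -> : phi = ((s0 * sinf)^-1)%g by apply: (mulgI (s0 * sinf)%g); rewrite mulgV.
rewrite invMg permM -{1}(s0K ((sinf^-1)%g x)) permK (nat_of_permE x0) /= /succ_mod.
congr nat_of_perm; have := rotationV rot x; rewrite /lbl addn1.
case: (eqVneq (val x).+1 (2 * n)) => [-> [->]|ne [->]]; first by rewrite modnn.
by rewrite modn_small // ltn_neqAle ne ltn_ord.
Qed.

Lemma special_3cycle_P0 {n} {s0 sinf s1 t : {perm 'I_(2 * n)}} :
  special_admissible n s0 sinf s1 t -> prod_disj_transp_3cycle (n - 3) (s1 * t)%g ->
  exists h k, [/\ 1 <= h <= n - 2, h < k < 2 * n - h, h = k %[mod 2] & s0 = P0 n h k].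
Proof.
move=> [[s0_pdt _ _ _ prod1] [rot s1_top t_top]] /prod_disj_transp_3cycleP.
set phi := (s1 * t)%g => -[a [b [c [/and3P[ab ac bc] [phi_a phi_b phi_c] phiK]]]].
have s0K := prod_disj_transpK s0_pdt.
pose S := nat_of_perm a s0.
have phi_nat := val_phi_succ_mod a s0K (etrans (mulgA _ _ _) prod1) rot.
have n_gt0 : 0 < n by have := ltn_ord a; lia.
have [top lbl_top] := @exists_lbl (2 * n) (2 * n) ltac:(lia).
have S0 : S 0 = 2 * n - 1.
  have top_val : (top : nat) = 2 * n - 1 by move: lbl_top; rewrite /lbl /=; lia.
  have := phi_nat top; rewrite /phi permM s1_top // t_top //= /succ_mod top_val.
  by rewrite subnK ?modnn //; lia.
move: (ltn_ord a) (ltn_ord b) (ltn_ord c) => a_lt b_lt c_lt.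
have val_neq (u v : 'I_(2 * n)) : u != v -> val u <> val v by move=> /eqP uv /val_inj.
have phiK_nat z : z < 2 * n -> z <> a -> z <> b -> z <> c ->
    (S \o succ_mod (2 * n)) ((S \o succ_mod (2 * n)) z) = z.
  move=> lt_z za zb zc; pose x := insubd a z.
  have xz : val x = z by rewrite val_insubd lt_z.
  have x_off : x \notin [:: a; b; c].
    by rewrite !inE -!(inj_eq val_inj) xz; apply/norP; split; [|apply/norP; split]; apply/eqP.
  by move/(congr1 val): (phiK x x_off); rewrite !phi_nat xz.
have [h [k [h_bound k_bound hk_mod2 S_P0]]] :=
  @S_chords n S (val a) (val b) (val c) (nat_of_permK a s0K)
    (nat_of_perm_moved a (prod_disj_transp_moved s0_pdt)) S0 a_lt b_lt c_lt
    (val_neq _ _ ab) (val_neq _ _ ac) (val_neq _ _ bc)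
    (etrans (esym (phi_nat a)) (congr1 val phi_a))
    (etrans (esym (phi_nat b)) (congr1 val phi_b))
    (etrans (esym (phi_nat c)) (congr1 val phi_c)) phiK_nat.
have lbl_s0 (x : 'I_(2 * n)) : lbl (s0 x) = P0_map n h k (lbl x).
  by rewrite (lbl_nat_of_perm a) -/S S_P0; last exact: ltn_ord.
exists h, k; split => //; apply/permP => x; apply: lbl_inj.
by rewrite lbl_P0 ?lbl_s0 //; lia.
Qed.

Lemma special_3cycle_shape n (s0 sinf s1 t : {perm 'I_(2 * n)}) :
  special_admissible n s0 sinf s1 t -> prod_disj_transp_3cycle (n - 3) (s1 * t)%g ->
  exists h k : nat,
    [/\ 1 <= h <= n - 2, h < k < 2 * n - h, h = k %[mod 2],
        s0 = P0 n h k /\ (s1 * t)%g = P1 n h k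
      & forall x : 'I_(2 * n), (s1 * t)%g x = x <->
          (lbl x = 2 * n \/ lbl x = (k + h) %/ 2 \/ lbl x = (2 * n - h + k) %/ 2)].
Proof.
move=> adm phi_3cycle; have [[_ _ _ _ prod1] [rot _ _]] := adm.
have [h [k [/andP[h_gt0 h_le] /andP[h_lt_k k_lt] hk_mod2 s0E]]] := special_3cycle_P0 adm phi_3cycle.
have phiE : (s1 * t)%g = P1 n h k.
  by apply: (mulgI (P0 n h k * sinf)%g); rewrite P0_sinf_P1 // -s0E !mulgA.
exists h, k; split; rewrite ?h_gt0 ?h_lt_k //.
by move=> x; rewrite phiE P1_fix.
Qed.

Section Converse.

Context {n h k : nat} {A B C : 'I_(2 * n)}.
Hypotheses (h_gt0 : 0 < h) (h_le : h <= n - 2) (h_lt_k : h < k) (k_lt : k < 2 * n - h)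
  (hk_mod2 : h = k %[mod 2]).
Hypotheses (AB : A != B) (AC : A != C) (BC : B != C)
  (PA : P1 n h k A = B) (PB : P1 n h k B = C) (PC : P1 n h k C = A)
  (PK : forall z, z \notin [:: A; B; C] -> P1 n h k (P1 n h k z) = z).

Lemma P0_prod_disj_transp : prod_disj_transp n (P0 n h k).
Proof.
apply: prod_disj_transp_id; first exact: P0K.
rewrite (eq_card (B := predT)) ?cardT ?size_enum_ord // => x; exact: P0_moved.
Qed.

Lemma card_fix_mul_tperm : #|[pred x | (P1 n h k * tperm B C)%g x == x]| = 4.
Proof.
have fixE := mul_tperm_3cycle_fix AB AC BC PA PB PC PK.
rewrite (cardD1 B) inE fixE eqxx orbT -(card_P1_fix h_gt0 h_lt_k k_lt hk_mod2).
congr _.+1; apply: eq_card => x; rewrite !inE fixE.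
have PB_moved : P1 n h k B != B by rewrite PB eq_sym.
case: (eqVneq x B) => [->|_]; rewrite /= ?orbF //; exact/esym/negbTE.
Qed.

Lemma mul_tperm_prod_disj_transp : prod_disj_transp (n - 2) (P1 n h k * tperm B C)%g.
Proof.
apply: prod_disj_transp_id; first exact: (mul_tperm_3cycleK AB AC PA PB PC PK).
have := cardC [pred x | (P1 n h k * tperm B C)%g x == x].
rewrite card_fix_mul_tperm card_ord (eq_card (B := [pred x | (P1 n h k * tperm B C)%g x != x])).
  by lia.
by move=> x; rewrite !inE.
Qed.

Lemma special_admissible_3cycle sinf : is_rotation sinf ->
  special_admissible n (P0 n h k) sinf (P1 n h k * tperm B C) (tperm B C).
Proof.
move=> rot; have top_fix x : lbl x = 2 * n -> P1 n h k x = x.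
  by move=> lx; apply/(P1_fix h_gt0 h_lt_k k_lt hk_mod2); left.
have moved_off x : P1 n h k x = x -> (B != x) && (C != x).
  move=> Px; apply/andP; split; apply/eqP => e; move: Px; rewrite -e.
  - by rewrite PB => /eqP; rewrite eq_sym (negbTE BC).
  - by rewrite PC => /eqP; rewrite (negbTE AC).
split; split.
- exact: P0_prod_disj_transp.
- by apply: rotation_kcycle rot; lia.
- exact: mul_tperm_prod_disj_transp.
- by exists B, C.
- have := P0_sinf_P1 h_gt0 h_lt_k k_lt hk_mod2 rot.
  by move: (P0 n h k) (P1 n h k) => p0 p1 <-; rewrite -!mulgA tperm2 mulg1.
- exact: rot.
- move=> x /top_fix Px; apply/eqP; rewrite (mul_tperm_3cycle_fix AB AC BC PA PB PC PK).
  by rewrite Px eqxx.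
- by move=> x /top_fix/moved_off/andP[Bx Cx]; rewrite tpermD.
Qed.

End Converse.

Lemma special_3cycle_count n h k :
  1 <= h <= n - 2 -> h < k < 2 * n - h -> h = k %[mod 2] ->
  uniq [:: @tp (2 * n) h k; tp h (2 * n - h); tp k (2 * n - h)] /\
  forall s0 sinf s1 t : {perm 'I_(2 * n)},
    (special_admissible n s0 sinf s1 t /\ s0 = P0 n h k /\ (s1 * t)%g = P1 n h k) <->
    [/\ t \in [:: tp h k; tp h (2 * n - h); tp k (2 * n - h)],
        s0 = P0 n h k, s1 = (P1 n h k * t)%g & is_rotation sinf].
Proof.
move=> /andP[h_gt0 h_le] /andP[h_lt_k k_lt] hk_mod2.
have [A lA] := @exists_lbl (2 * n) (2 * n - h) ltac:(lia).
have [B lB] := @exists_lbl (2 * n) h ltac:(lia).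
have [C lC] := @exists_lbl (2 * n) k ltac:(lia).
have [AB AC BC] : [/\ A != B, A != C & B != C] by rewrite -!lbl_eq lA lB lC; split; lia.
have [PA PB PC] := P1_3cycle h_gt0 h_lt_k k_lt hk_mod2 lA lB lC.
have PK z : z \notin [:: A; B; C] -> P1 n h k (P1 n h k z) = z.
  by move=> z_off; apply: P1K_off; move: z_off; rewrite !inE -!lbl_eq lA lB lC.
rewrite (tp_tperm lB lC) (tp_tperm lB lA) (tp_tperm lC lA).
split; first exact: uniq_tperm_3cycle.
move=> s0 sinf s1 t; split.
  move=> [[[_ _ s1_pdt [x [y [xy tE]]] _] [rot _ _]] [s0E phiE]].
  have s1E : s1 = (P1 n h k * t)%g by rewrite -phiE -mulgA tE tperm2 mulg1.
  split=> //; rewrite tE; apply: (tperm_of_mul_tpermK AB AC BC PA PB PC xy).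
  by rewrite -tE -s1E; apply: prod_disj_transpK s1_pdt.
case=> t_mem -> -> rot.
suff adm : special_admissible n (P0 n h k) sinf (P1 n h k * t) t.
  split=> //; split=> //; case: adm => [[_ _ _ [x [y [_ ->]]] _] _].
  by move: (P1 n h k) => p; rewrite -mulgA tperm2 mulg1.
have PK_rot1 z : z \notin [:: B; C; A] -> P1 n h k (P1 n h k z) = z.
  by rewrite -(mem_rot 2) /=; exact: PK.
have PK_rot2 z : z \notin [:: C; A; B] -> P1 n h k (P1 n h k z) = z.
  by rewrite -(mem_rot 1) /=; exact: PK.
have [BA CA CB] : [/\ B != A, C != A & C != B] by rewrite ![_ == A]eq_sym [C == B]eq_sym.
move: t_mem; rewrite !inE => /or3P[]/eqP->.
- exact: (special_admissible_3cycle h_gt0 h_le h_lt_k k_lt hk_mod2 AB AC BC PA PB PC PK).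
- rewrite tpermC; exact: (special_admissible_3cycle h_gt0 h_le h_lt_k k_lt hk_mod2 CA CB AB PC PA PB PK_rot2).
- exact: (special_admissible_3cycle h_gt0 h_le h_lt_k k_lt hk_mod2 BC BA CA PB PC PA PK_rot1).
Qed.

Theorem mainTheorem14 (n : nat) :
  (forall s0 sinf s1 t : {perm 'I_(2 * n)},
    special_admissible n s0 sinf s1 t ->
    prod_disj_transp_3cycle (n - 3) (s1 * t)%g ->
    exists h k : nat,
      [/\ 1 <= h <= n - 2, h < k < 2 * n - h, h = k %[mod 2],
          s0 = P0 n h k /\ (s1 * t)%g = P1 n h k
        & forall x : 'I_(2 * n),
            (s1 * t)%g x = x <->
            (lbl x = 2 * n \/ lbl x = (k + h) %/ 2 \/ lbl x = (2 * n - h + k) %/ 2)])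
  /\
  (forall h k : nat,
    1 <= h <= n - 2 -> h < k < 2 * n - h -> h = k %[mod 2] ->
    uniq [:: @tp (2 * n) h k; tp h (2 * n - h); tp k (2 * n - h)] /\
    forall s0 sinf s1 t : {perm 'I_(2 * n)},
      (special_admissible n s0 sinf s1 t /\ s0 = P0 n h k /\ (s1 * t)%g = P1 n h k) <->
      [/\ t \in [:: tp h k; tp h (2 * n - h); tp k (2 * n - h)],
          s0 = P0 n h k, s1 = (P1 n h k * t)%g
        & forall x, lbl (sinf x) = (if lbl x == 1 then 2 * n else (lbl x).-1)]).
Proof.
split; [exact: special_3cycle_shape | exact: special_3cycle_count].
Qed.
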